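(* Let $(Y,d)$ be a metric space, let $\mathcal M\subset Y$ be a finite-dimensional log-Lipschitz manifold (over $\mathbb R^N$), and let $X\subset\mathcal M$ be compact. Then $$\dim_{Log-D}(X):=\limsup_{\varepsilon\to0}\frac{\log D_\varepsilon(X)}{\log\log\frac1\varepsilon}<\infty .$$
   Context: A map $T:X_1\to X_2$ between metric spaces is log-Lipschitz if there exist $\gamma\in(0,\infty)$ and $C>0$ such that $d(Tx_1,Tx_2)\le C\,d(x_1,x_2)\big(\log\frac{C}{d(x_1,x_2)}\big)^\gamma$ for all $x_1,x_2\in X_1$; $T$ is a bi-log-Lipschitz homeomorphism if $T$ and $T^{-1}$ are both log-Lipschitz. $\mathcal M$ is a log-Lipschitz manifold over $\mathbb R^N$ if it is locally homeomorphic to $\mathbb R^N$ and all coordinate maps (from open subsets of $\mathcal M$ onto open subsets of $\mathbb R^N$) are bi-log-Lipschitz with the same constants $C$ and $\gamma$. For a compact metric space $X$ and $B\subset X$, $N_\varepsilon(B,X)$ denotes the minimal number of $\varepsilon$-balls of $X$ covering $B$. The doubling factor is $D_\varepsilon(X):=\sup_{x\in X}N_{\varepsilon/2}(B(\varepsilon,x),X)$, where $B(r,x)$ is the ball of radius $r$ in $X$ centered at $x$. *)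

From HB Require Import structures.
From mathcomp Require Import all_boot all_order all_algebra.
From mathcomp Require Import all_classical all_reals all_analysis.
Set Implicit Arguments. Unset Strict Implicit. Unset Printing Implicit Defensive.
Import Order.TTheory GRing.Theory Num.Theory.
Local Open Scope classical_set_scope.
Local Open Scope ring_scope.

Section Defs.
Variable R : realType.

Definition is_metric (T : Type) (d : T -> T -> R) : Prop :=
  [/\ forall x y, 0 <= d x y,
      forall x y, d x y = 0 <-> x = y,
      forall x y, d x y = d y x &
      forall x y z, d x z <= d x y + d y z].

Definition euclid (N : nat) (u v : 'rV[R]_N) : R :=
  Num.sqrt (\sum_(i < N) (u ord0 i - v ord0 i) ^+ 2).

Definition dball (T : Type) (d : T -> T -> R) (r : R) (x : T) : set T :=
  [set y | d x y < r].

Definition rel_open (T : Type) (d : T -> T -> R) (A U : set T) : Prop :=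
  U `<=` A /\ forall x, U x -> exists2 r : R, 0 < r & dball d r x `&` A `<=` U.

Definition mcompact (T : Type) (d : T -> T -> R) (X : set T) : Prop :=
  forall (I : Type) (U : I -> set T),
    (forall i, rel_open d setT (U i)) -> X `<=` \bigcup_i U i ->
    exists (n : nat) (f : nat -> I),
      X `<=` \bigcup_(k in [set k : nat | (k < n)%N]) U (f k).

(* The inequality is required where it is meaningful, i.e. for 0 < d1 < C
   (so that log(C/d1) > 0). *)
Definition loglip (T1 T2 : Type) (d1 : T1 -> T1 -> R) (d2 : T2 -> T2 -> R)
  (A : set T1) (f : T1 -> T2) (C gamma : R) : Prop :=
  forall x1 x2, A x1 -> A x2 -> 0 < d1 x1 x2 < C ->
    d2 (f x1) (f x2) <= C * d1 x1 x2 * (ln (C / d1 x1 x2)) `^ gamma.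

Definition loglip_chart (T : Type) (d : T -> T -> R) (M : set T) (N : nat)
  (C gamma : R) (U : set T) (V : set 'rV[R]_N)
  (phi : T -> 'rV[R]_N) (psi : 'rV[R]_N -> T) : Prop :=
  [/\ rel_open d M U, rel_open (@euclid N) setT V,
      (forall x, U x -> V (phi x) /\ psi (phi x) = x),
      (forall v, V v -> U (psi v) /\ phi (psi v) = v) &
      loglip d (@euclid N) U phi C gamma /\
      loglip (@euclid N) d V psi C gamma].

Definition loglip_manifold (T : Type) (d : T -> T -> R) (M : set T) (N : nat)
  : Prop :=
  exists C gamma : R, [/\ 0 < C, 0 < gamma &
    forall x, M x -> exists U V phi psi,
      U x /\ @loglip_chart T d M N C gamma U V phi psi].

Definition covnum (T : Type) (d : T -> T -> R) (eps : R) (B X : set T) : R :=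
  inf [set (n%:R : R) | n in [set n : nat | exists c : nat -> T,
         (forall i, (i < n)%N -> X (c i)) /\
         B `<=` \bigcup_(i in [set i : nat | (i < n)%N]) dball d eps (c i)]].

Definition doubling (T : Type) (d : T -> T -> R) (eps : R) (X : set T) : R :=
  sup [set covnum d (eps / 2) (dball d eps x `&` X) X | x in X].

End Defs.

(* A chart [phi] maps the trace on [X] of a ball [B(eps, y)] into a Euclidean
   ball of radius [rho = C eps (ln (C / eps))^g].  Cut that ball into cubes of
   side [s / (N + 1)], where [s ~ eps / (ln (1 / eps))^g] is small enough for
   the inverse chart to send sets of diameter [s] to sets of diameter
   [< eps / 2].  The number of cubes bounds [D_eps(X)] by
   [(A (ln (1 / eps))^(4 g))^N] for a constant [A], and a Lebesgue number of
   the chart cover of the compact set [X] makes this bound uniform in [y]. *)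
From HB Require Import structures.
From mathcomp Require Import all_boot all_order all_algebra.
From mathcomp Require Import all_classical all_reals all_analysis.
From mathcomp Require Import lra ring.
Import Order.TTheory GRing.Theory Num.Theory.
Import numFieldTopology.Exports numFieldNormedType.Exports.
Local Open Scope classical_set_scope.
Local Open Scope ring_scope.

Section LogLipschitzModulus.
Context {R : realType}.
Implicit Types C g t : R.

Definition loglip_modulus C g t : R := C * t * ln (C / t) `^ g.

Lemma loglip_modulus_ge0 C g t : 0 <= C -> 0 <= t -> 0 <= loglip_modulus C g t.
Proof. by move=> C0 t0; rewrite !mulr_ge0 ?powR_ge0. Qed.

(* With [a := ln (C / t2)] and [v := ln t2 - ln t1], this reduces to
   [g * ln (a + v) <= g * ln a + v], which follows from
   [ln (a + v) <= ln a + v / a] and [g <= a]. *)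
Lemma loglip_modulus_le C g t1 t2 : 0 < C -> 0 < g -> 0 < t1 -> t1 <= t2 ->
  t2 <= C * expR (- g) -> loglip_modulus C g t1 <= loglip_modulus C g t2.
Proof.
move=> C0 g0 t10 t12 t2C; have t20 : 0 < t2 by apply: lt_le_trans t12.
rewrite /loglip_modulus -!mulrA ler_wpM2l ?(ltW C0) //.
set a := ln (C / t2); set v := ln t2 - ln t1.
have ga : g <= a.
  rewrite -[g]expRK ler_ln ?posrE ?expR_gt0 ?divr_gt0 //.
  by rewrite ler_pdivlMr // mulrC -ler_pdivlMr ?expR_gt0 // -expRN.
have a0 : 0 < a by apply: lt_le_trans ga.
have v0 : 0 <= v by rewrite subr_ge0 ler_ln ?posrE.
have av0 : 0 < a + v by apply: (lt_le_trans a0); rewrite lerDl.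
have -> : ln (C / t1) = a + v by rewrite /a /v !ln_div ?posrE // addrA subrK.
have ln_av : ln (a + v) <= ln a + v / a.
  have -> : a + v = a * (1 + v / a) by rewrite mulrDr mulr1 mulrCA divff ?gt_eqF // mulr1.
  rewrite lnM ?posrE // ?lerD2l ?le_ln1Dx //; last first.
    by apply: (lt_le_trans ltr01); rewrite lerDl divr_ge0 // ltW.
  by apply: lt_le_trans (divr_ge0 v0 (ltW a0)); rewrite ltrN10.
have gva : g * (v / a) <= v by rewrite mulrCA ler_piMr // ler_pdivrMr // mul1r.
rewrite -ler_ln ?posrE ?mulr_gt0 ?powR_gt0 // !lnM ?posrE ?powR_gt0 // !ln_powR.
have -> : ln t2 = ln t1 + v by rewrite /v addrC subrK.
have := ler_wpM2l (ltW g0) ln_av; rewrite mulrDr; lra.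
Qed.

Context {T1 T2 : Type} {d1 : T1 -> T1 -> R} {d2 : T2 -> T2 -> R}.
Hypothesis d1_ge0 : forall x y, 0 <= d1 x y.
Hypothesis d1_eq0 : forall x y, d1 x y = 0 -> x = y.
Hypothesis d2xx : forall z, d2 z z = 0.

Lemma loglip_le_modulus {A : set T1} {f : T1 -> T2} {C g eps : R} {x y : T1} :
  loglip d1 d2 A f C g -> 0 < C -> 0 < g -> 0 < eps < C ->
  eps <= C * expR (- g) -> A x -> A y -> d1 x y <= eps ->
  d2 (f x) (f y) <= loglip_modulus C g eps.
Proof.
move=> lf C0 g0 /andP[eps0 epsC] epsg Ax Ay dxy.
have [/d1_eq0 <-|dn0] := eqVneq (d1 x y) 0.
  by rewrite d2xx loglip_modulus_ge0 // ltW.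
have dpos : 0 < d1 x y by rewrite lt_neqAle eq_sym dn0 d1_ge0.
apply: le_trans (lf x y Ax Ay _) _; first by rewrite dpos (le_lt_trans dxy epsC).
exact: loglip_modulus_le.
Qed.

End LogLipschitzModulus.

Lemma truncn_eq_dist {R : realType} {h a b : R} : 0 < h -> 0 <= a -> 0 <= b ->
  Num.trunc (a / h) = Num.trunc (b / h) -> `|a - b| <= h.
Proof.
move=> h0 a0 b0 abE.
have := truncn_itv (divr_ge0 a0 (ltW h0)); have := truncn_itv (divr_ge0 b0 (ltW h0)).
rewrite abE -addn1 natrD => /andP[kb bk] /andP[ka ak].
have -> : a - b = h * (a / h - b / h) by rewrite mulrBr ![h * _]mulrC !divfK ?gt_eqF.
by rewrite normrM gtr0_norm // ler_piMr ?(ltW h0) // ler_norml; apply/andP; split; lra.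
Qed.

Section Euclid.
Context {R : realType} {N : nat}.
Implicit Types u v c z : 'rV[R]_N.

Lemma euclid_ge0 u v : 0 <= euclid u v.
Proof. exact: sqrtr_ge0. Qed.

Lemma euclidxx u : euclid u u = 0.
Proof. by rewrite /euclid big1 ?sqrtr0 // => i _; rewrite subrr expr0n. Qed.

Lemma euclid_eq0 u v : euclid u v = 0 -> u = v.
Proof.
move=> /eqP; rewrite /euclid sqrtr_eq0 => sum_le0.
have sum0 : \sum_(i < N) (u ord0 i - v ord0 i) ^+ 2 = 0.
  by apply/eqP; rewrite eq_le sum_le0 sumr_ge0 // => j _; exact: sqr_ge0.
apply/rowP => i; apply/eqP; rewrite -subr_eq0 -sqrf_eq0; apply/eqP.
by apply: (psumr_eq0P _ sum0) => // j _; exact: sqr_ge0.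
Qed.

Lemma coord_le_euclid u v i : `|u ord0 i - v ord0 i| <= euclid u v.
Proof.
rewrite /euclid -sqrtr_sqr ler_sqrt; last by apply: sumr_ge0 => j _; exact: sqr_ge0.
by rewrite (bigD1 i) //= lerDl; apply: sumr_ge0 => j _; exact: sqr_ge0.
Qed.

Lemma euclid_le_coord {u v} {h : R} : 0 <= h ->
  (forall i, `|u ord0 i - v ord0 i| <= h) -> euclid u v <= N%:R * h.
Proof.
move=> h0 uvh; rewrite /euclid -[leRHS]ger0_norm ?mulr_ge0 // -sqrtr_sqr.
rewrite ler_sqrt ?sqr_ge0 //; apply: (@le_trans _ _ (\sum_(i < N) h ^+ 2)).
  by apply: ler_sum => i _; rewrite -real_normK ?num_real // ler_pXn2r ?nnegrE.
rewrite sumr_const card_ord exprMn -[_ *+ N]mulr_natl ler_wpM2r ?sqr_ge0 //.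
by rewrite -natrX ler_nat; case: (N) => // n; rewrite expnS leq_pmulr.
Qed.

(* Cells of side [h] of the cube of side [2 * rho] centred at [c]; [inord]
   sends out-of-range indices to [0], which is harmless for points of the
   cube. *)
Definition grid_cell (m : nat) (h rho : R) c z : {ffun 'I_N -> 'I_m.+1} :=
  [ffun i => inord (Num.trunc ((z ord0 i - c ord0 i + rho) / h))].

Lemma grid_cell_close {h rho : R} {c z z'} : 0 < h ->
  euclid c z <= rho -> euclid c z' <= rho ->
  grid_cell (Num.trunc (2 * rho / h)) h rho c z =
  grid_cell (Num.trunc (2 * rho / h)) h rho c z' ->
  euclid z z' <= N%:R * h.
Proof.
move=> h0 czr cz'r cellE; apply: euclid_le_coord (ltW h0) _ => i.
have shifted w i0 : euclid c w <= rho ->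
    0 <= w ord0 i0 - c ord0 i0 + rho /\
    (Num.trunc ((w ord0 i0 - c ord0 i0 + rho) / h) < (Num.trunc (2 * rho / h)).+1)%N.
  move=> cwr; have := le_trans (coord_le_euclid c w i0) cwr.
  rewrite distrC ler_norml => /andP[lo hi].
  split; first lra.
  by rewrite ltnS le_truncn // ler_wpM2r ?invr_ge0 ?(ltW h0) //; lra.
have [a0 a_lt] := shifted z i czr; have [b0 b_lt] := shifted z' i cz'r.
have := congr1 (fun f : {ffun _ -> _} => val (f i)) cellE.
rewrite /= !ffunE /= !inordK // => truncE.
by have := truncn_eq_dist h0 a0 b0 truncE; rewrite opprD addrACA subrr addr0 opprB addrA subrK.
Qed.

End Euclid.

Lemma covnum_le_card {R : realType} {T : Type} {d : T -> T -> R} {r : R}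
    {B X : set T} {K : finType} (key : T -> K) {x0 : T} :
  X x0 -> B `<=` X ->
  (forall w w', B w -> B w' -> key w = key w' -> d w w' < r) ->
  covnum d r B X <= #|K|%:R.
Proof.
move=> Xx0 BX key_close.
pose rep (k : K) : T := if pselect (exists w, B w /\ key w = k) is left ex
  then proj1_sig (cid ex) else x0.
have repP k : X (rep k) /\ forall w, B w -> key w = k -> d (rep k) w < r.
  rewrite /rep; case: pselect => [ex|nex]; last first.
    by split=> // w Bw kw; exfalso; apply: nex; exists w.
  case: (cid ex) => /= w0 [Bw0 kw0]; split; first exact: BX.
  by move=> w Bw kw; apply: key_close; rewrite ?kw0.
pose c i := rep (nth (key x0) (enum K) i).
apply: ge_inf; first by exists 0 => _ [n _ <-]; exact: ler0n.
exists #|K| => //; exists c; split=> [i _|w Bw]; first exact: (proj1 (repP _)).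
exists (index (key w) (enum K)); first by rewrite /= cardE index_mem mem_enum.
by rewrite /dball /c nth_index ?mem_enum //; apply: (proj2 (repP _)).
Qed.

Lemma doubling_le {R : realType} {T : Type} {d : T -> T -> R} {eps b : R}
    {X : set T} :
  0 <= b -> (forall y, X y -> covnum d (eps / 2) (dball d eps y `&` X) X <= b) ->
  doubling d eps X <= b.
Proof.
move=> b0 covb; rewrite /doubling.
have [[y Xy]|noX] := pselect (exists y, X y).
  apply: ge_sup => [|t [z Xz <-]]; last exact: covb.
  by exists (covnum d (eps / 2) (dball d eps y `&` X) X), y.
suff -> : [set covnum d (eps / 2) (dball d eps y `&` X) X | y in X] = set0 by rewrite sup0.
by apply/seteqP; split => // t [y Xy _]; apply: noX; exists y.
Qed.

Section ChartCover.
Context {R : realType} {Y : Type} {d : Y -> Y -> R} {N : nat} {C g : R}.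
Context {U : set Y} {V : set 'rV[R]_N} {phi : Y -> 'rV[R]_N} {psi : 'rV[R]_N -> Y}.
Hypotheses (dm : is_metric d) (C0 : 0 < C) (g0 : 0 < g).
Hypothesis psiK : forall x, U x -> V (phi x) /\ psi (phi x) = x.
Hypothesis phi_loglip : loglip d (@euclid R N) U phi C g.
Hypothesis psi_loglip : loglip (@euclid R N) d V psi C g.

(* Cut the image under [phi] of the ball into grid cells of side [h]; a cell
   has diameter at most [N * h <= s], so its preimage has diameter at most
   [loglip_modulus C g s < eps / 2]. *)
Lemma covnum_chart_ball_le (X : set Y) (y : Y) (eps s h : R) :
  0 < eps < C -> eps <= C * expR (- g) ->
  0 < s < C -> s <= C * expR (- g) -> loglip_modulus C g s < eps / 2 ->
  0 < h -> N%:R * h <= s ->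
  X y -> dball d eps y `&` X `<=` U ->
  covnum d (eps / 2) (dball d eps y `&` X) X <=
  ((Num.trunc (2 * loglip_modulus C g eps / h)).+1 ^ N)%:R.
Proof.
move=> eps_bd eps_g s_bd s_g s_small h0 Nh_s Xy ballU.
have [d_ge0 d_eq0 _ _] := dm.
have dxx x : d x x = 0 by apply/(proj2 (d_eq0 x x)).
set rho := loglip_modulus C g eps.
have Uy : U y by apply: ballU; split=> //; rewrite /dball /= dxx; case/andP: eps_bd.
have phi_near w : (dball d eps y `&` X) w -> euclid (phi y) (phi w) <= rho.
  move=> Bw; apply: (loglip_le_modulus d_ge0 (fun x y => proj1 (d_eq0 x y))
    (@euclidxx R N) phi_loglip) => //; first exact: ballU.
  by case: Bw => /ltW.
set m := Num.trunc (2 * rho / h).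
have -> : (m.+1 ^ N)%N = #|{ffun 'I_N -> 'I_m.+1}| by rewrite card_ffun !card_ord.
apply: (covnum_le_card (grid_cell m h rho (phi y) \o phi) Xy).
  by move=> w [].
move=> w w' Bw Bw' /= cellE.
have [Vw <-] := psiK _ (ballU _ Bw); have [Vw' <-] := psiK _ (ballU _ Bw').
apply: le_lt_trans s_small.
apply: (loglip_le_modulus (@euclid_ge0 R N) (@euclid_eq0 R N) dxx psi_loglip) => //.
exact: le_trans (grid_cell_close h0 (phi_near w Bw) (phi_near w' Bw') cellE) Nh_s.
Qed.

End ChartCover.

Section SmallScale.
Context {R : realType}.
Variables (C g e : R).
Hypotheses (C0 : 0 < C) (g0 : 0 < g) (e0 : 0 < e).
Let L := ln (C / e).
Hypothesis L_ge1 : 1 <= L.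
Hypothesis L_large : ln (4 * C) + g * ln (2 * L) <= L.
Hypothesis e_small : e <= 4 * C ^+ 2 * expR (- g).

(* [s] is chosen so that [ln (C / s) <= 2 * L], whence
   [loglip_modulus C g s <= C * s * P = e / 4]. *)
Let P := (2 * L) `^ g.
Let s := e / (4 * C * P).

Let P_ge1 : 1 <= P.
Proof.
have one_powR : (1 : R) `^ g = 1 by rewrite powR1.
rewrite /P -[leLHS]one_powR ge0_ler_powR ?nnegrE ?(ltW g0) //.
all: move: L_ge1; lra.
Qed.

Let P_gt0 : 0 < P. Proof. exact: lt_le_trans ltr01 P_ge1. Qed.

Let s_gt0 : 0 < s. Proof. by rewrite divr_gt0 // !mulr_gt0. Qed.

Let ln_Cs : ln (C / s) = L + (ln (4 * C) + g * ln (2 * L)).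
Proof.
have LE : L = ln C - ln e by rewrite /L ln_div ?posrE.
rewrite ln_div ?posrE // /s ln_div ?posrE ?mulr_gt0 // lnM ?posrE ?mulr_gt0 //.
by rewrite /P ln_powR; move: LE; lra.
Qed.

Lemma small_scale_spec :
  [/\ 0 < s, s <= C * expR (- g), s < C & loglip_modulus C g s < e / 2].
Proof.
have s_le : s <= C * expR (- g).
  apply: (@le_trans _ _ (e / (4 * C))).
    rewrite /s invfM mulrA ler_pdivrMr // ler_peMr //.
    by rewrite divr_ge0 ?mulr_ge0 // ltW.
  rewrite ler_pdivrMr ?mulr_gt0 //; apply: le_trans e_small _.
  by rewrite [leRHS](_ : _ = 4 * C ^+ 2 * expR (- g)) //; ring.
have s_lt : s < C by apply: le_lt_trans s_le _; rewrite gtr_pMr // expR_lt1 oppr_lt0.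
split => //; apply: (@le_lt_trans _ _ (C * s * P)).
  apply: ler_wpM2l; first by rewrite mulr_ge0 // ltW.
  rewrite ge0_ler_powR ?nnegrE ?(ltW g0) ?ln_ge0 ?ler_pdivlMr ?mul1r ?(ltW s_lt) //.
    by move: L_ge1; lra.
  by rewrite ln_Cs; move: L_large; lra.
rewrite /s; have -> : C * (e / (4 * C * P)) * P = e / 4 by field; rewrite !gt_eqF.
by move: e0; lra.
Qed.

Lemma ln_grid_size_le (N : nat) :
  ln ((Num.trunc (2 * loglip_modulus C g e / (s / N.+1%:R))).+1%:R) <=
  ln (8 * C ^+ 2 * N.+1%:R + 1) + 2 * g * ln (2 * L).
Proof.
set A := 8 * C ^+ 2 * N.+1%:R.
have A0 : 0 <= A by rewrite /A; apply/mulr_ge0/ler0n/mulr_ge0/sqr_ge0.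
have rhoE : 2 * loglip_modulus C g e / (s / N.+1%:R) = A * L `^ g * P.
  by rewrite /loglip_modulus /s /A; field; rewrite !gt_eqF.
have LP : L `^ g <= P.
  by rewrite /P ge0_ler_powR ?nnegrE ?(ltW g0) //; move: L_ge1; lra.
have grid_le : (Num.trunc (A * L `^ g * P)).+1%:R <= (A + 1) * P ^+ 2.
  rewrite -addn1 natrD.
  apply: (@le_trans _ _ (A * L `^ g * P + 1)).
    by rewrite lerD2r truncn_le; apply: mulr_ge0; [exact: mulr_ge0 (powR_ge0 _ _) | exact: ltW].
  have P2 : 1 <= P ^+ 2 by rewrite expr_ge1 // ltW.
  have : A * L `^ g * P <= A * P ^+ 2.
    by rewrite expr2 mulrA ler_wpM2r ?(ltW P_gt0) // ler_wpM2l.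
  by rewrite mulrDl mul1r; lra.
have A1 : 0 < A + 1 by move: A0; lra.
rewrite rhoE; apply: (@le_trans _ _ (ln ((A + 1) * P ^+ 2))).
  by rewrite ler_ln ?posrE ?mulr_gt0 ?exprn_gt0.
by rewrite lnM ?posrE ?exprn_gt0 // lnXn // /P ln_powR lerD2l -[leRHS]mulrA [leRHS]mulr_natl.
Qed.

End SmallScale.

Lemma pos_lbound_prefix {R : realType} (a : nat -> R) (n : nat) :
  (forall k, 0 < a k) -> exists2 r : R, 0 < r & forall k, (k < n)%N -> r <= a k.
Proof.
move=> a_gt0; elim: n => [|n [r r0 ra]]; first by exists 1.
exists (Order.min r (a n)); first by rewrite lt_min r0 a_gt0.
move=> k; rewrite ltnS leq_eqVlt => /orP[/eqP->|kn]; first by rewrite ge_min lexx orbT.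
by rewrite ge_min ra.
Qed.

(* Cover [X] by the balls of radius [r x / 2], where [B(r x, x)] lies in a
   good set, and let [δ] be the least of the finitely many radii used. *)
Lemma lebesgue_number {R : realType} {Y : Type} {d : Y -> Y -> R} (M X : set Y)
    {good : set Y -> Prop} :
  is_metric d -> X `<=` M -> mcompact d X ->
  (forall x, M x -> exists U, [/\ U x, rel_open d M U & good U]) ->
  exists2 δ : R, 0 < δ & forall y, X y -> exists U, good U /\
    forall eps, eps <= δ -> dball d eps y `&` X `<=` U.
Proof.
move=> [_ d_eq0 _ d_tri] XM cX goodM.
have /choice[r rP] : forall x, exists r : R, 0 < r /\
    (X x -> exists U, good U /\ dball d r x `&` M `<=` U).
  move=> x; have [Xx|] := pselect (X x); last by exists 1.
  have [U [Ux [_ Uopen] gU]] := goodM x (XM x Xx).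
  by have [r r0 rU] := Uopen x Ux; exists r; split=> // _; exists U.
pose B x : set Y := [set z | X x /\ d x z < r x / 2].
have [|x Xx|n [c cover]] := cX Y B.
- move=> x; split=> // z [Xx dz]; exists (r x / 2 - d x z); first by rewrite subr_gt0.
  by move=> w [dzw _]; split=> //; have := d_tri x z w; rewrite /dball /= in dzw; lra.
- exists x => //; split=> //; rewrite (proj2 (d_eq0 x x) erefl).
  by rewrite divr_gt0 //; case: (rP x).
have [δ δ0 δr] := pos_lbound_prefix (fun k => r (c k) / 2) n
  (fun k => divr_gt0 (proj1 (rP (c k))) (ltr0Sn _ 1)).
exists δ => // y Xy; have [k kn [Xck dck]] := cover y Xy.
have [_ /(_ Xck) [U [gU rU]]] := rP (c k).
exists U; split=> // eps epsδ z [dyz Xz]; apply: rU; split; last exact: XM.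
by have := d_tri (c k) y z; have := δr k kn; rewrite /dball /= in dyz *; lra.
Qed.

Lemma limf_esup_le_near {R : realType} {T : choiceType} {X : filteredType T}
    {f : X -> \bar R} {F : set_system X} {K : \bar R} :
  (\forall x \near F, (f x <= K)%E) -> (limf_esup f F <= K)%E.
Proof.
move=> fK; rewrite limf_esupE.
apply: (@le_trans _ _ (ereal_sup (f @` [set x | (f x <= K)%E]))).
  by apply: ereal_inf_lbound; exists [set x | (f x <= K)%E].
by apply: ge_ereal_sup => _ [x fxK <-].
Qed.

Lemma lnV_cvgy {R : realType} : ln e^-1 @[e --> (0 : R)^'+] --> +oo.
Proof.
apply/cvgryPger => A _; near=> e.
have e0 : 0 < e by near: e; exact: nbhs_right_gt.
by rewrite lnV ?posrE // lerNr; near: e; exact: (cvgrNy_ler (@lnNy R) (num_real _)).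
Unshelve. all: end_near.
Qed.

Lemma ln_sublinear_near {R : realType} (a b : R) :
  \forall x \near +oo, a + b * ln x <= x.
Proof.
set T := `|a| + 2 * `|b| + 1.
have T1 : 1 <= T by rewrite /T; have := normr_ge0 a; have := normr_ge0 b; lra.
near=> x.
have Tx : T ^+ 2 <= x by near: x; apply: nbhs_pinfty_ge; rewrite num_real.
have x0 : 0 < x by apply: lt_le_trans Tx; rewrite exprn_gt0 //; lra.
set r := Num.sqrt x.
have rr : r * r = x by rewrite -expr2 sqr_sqrtr // ltW.
have Tr : T <= r by rewrite -(ger0_norm (le_trans ler01 T1)) -sqrtr_sqr ler_sqrt.
have r0 : 0 < r by lra.
have lnx0 : 0 <= ln x by rewrite ln_ge0 // (le_trans _ Tx) // expr_ge1 // ltW.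
have lnx : ln x <= 2 * r by rewrite -rr lnM ?posrE //; have := ln_sublinear r0; lra.
have blnx : b * ln x <= `|b| * (2 * r).
  by apply: le_trans (ler_wpM2r lnx0 (ler_norm b)) (ler_wpM2l (normr_ge0 b) lnx).
have ar : `|a| <= `|a| * r by rewrite ler_peMr //; lra.
have : T * r <= r * r by rewrite ler_wpM2r // ltW.
rewrite /T !mulrDl mul1r rr; have := ler_norm a; move: blnx; rewrite mulrCA; lra.
Unshelve. all: end_near.
Qed.

Definition chart_domain {R : realType} {Y : Type} (d : Y -> Y -> R) (M : set Y)
    (N : nat) (C g : R) (U : set Y) : Prop :=
  exists V phi psi, @loglip_chart R Y d M N C g U V phi psi.

Section DoublingBound.
Context {R : realType} {Y : Type} {d : Y -> Y -> R} {M X : set Y} {N : nat}.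
Context {C g δ : R}.
Hypotheses (dm : is_metric d) (C0 : 0 < C) (g0 : 0 < g).
Hypothesis charts : forall y, X y ->
  exists U, chart_domain d M N C g U /\
    forall eps, eps <= δ -> dball d eps y `&` X `<=` U.

Lemma ln_doubling_le e : 0 < e -> e <= δ -> e <= C * expR (- g) ->
  e <= 4 * C ^+ 2 * expR (- g) -> 1 <= ln (C / e) ->
  ln (4 * C) + g * ln (2 * ln (C / e)) <= ln (C / e) ->
  ln (doubling d e X) <=
  N%:R * (ln (8 * C ^+ 2 * N.+1%:R + 1) + 2 * g * ln (2 * ln (C / e))).
Proof.
move=> e0 eδ e_g e_small L1 L_large.
have [s0 s_g s_C s_small] := small_scale_spec C g e C0 g0 e0 L1 L_large e_small.
have grid_le := ln_grid_size_le C g e C0 g0 e0 L1 N.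
set s := e / _ in s0 s_g s_C s_small grid_le.
set m := Num.trunc _ in grid_le.
have eC : e < C by apply: le_lt_trans e_g _; rewrite gtr_pMr // expR_lt1 oppr_lt0.
have D_le : doubling d e X <= (m.+1 ^ N)%:R.
  apply: doubling_le => // y Xy.
  have [U [[V [phi [psi [_ _ psiK _ [lphi lpsi]]]]] ballU]] := charts y Xy.
  have h0 : 0 < s / N.+1%:R by rewrite divr_gt0.
  apply: (covnum_chart_ball_le dm C0 g0 psiK lphi lpsi X y e s (s / N.+1%:R));
    rewrite ?e0 ?s0 //; last exact: ballU.
  by rewrite mulrCA ger_pMr // ler_pdivrMr // mul1r ler_nat.
apply: (@le_trans _ _ (ln ((m.+1 ^ N)%:R))).
  have [D0|D0] := leP (doubling d e X) 0; first by rewrite ln0 // ln_ge0 // ler1n expn_gt0.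
  by rewrite ler_ln ?posrE ?ltr0n ?expn_gt0.
by rewrite natrX lnXn // -[_ *+ N]mulr_natl ler_wpM2l.
Qed.

Lemma doubling_ratio_le e : 0 < e -> e <= δ -> e <= C * expR (- g) ->
  e <= 4 * C ^+ 2 * expR (- g) ->
  expR 1 <= ln e^-1 -> 2 * `|ln C| + 4 <= ln e^-1 ->
  ln 4 + g * ln 3 + g * ln (ln e^-1) <= ln e^-1 ->
  ln (doubling d e X) / ln (ln e^-1) <=
  N%:R * (ln (8 * C ^+ 2 * N.+1%:R + 1) + 4 * g).
Proof.
move=> e0 eδ e_g e_small u_ge u_C u_sublin.
set u := ln e^-1 in u_ge u_C u_sublin *.
set L := ln (C / e).
have u0 : 0 < u by apply: lt_le_trans u_ge; exact: expR_gt0.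
have lnu1 : 1 <= ln u by rewrite -(expRK 1) ler_ln ?posrE ?expR_gt0.
have LE : L = ln C + u by rewrite /L ln_div ?posrE // /u lnV ?posrE.
have LdefE : ln (C / e) = L by [].
clearbody u L.
have lnC_lo : - `|ln C| <= ln C by rewrite lerNl -normrN ler_norm.
have lnC_hi : ln C <= `|ln C| := ler_norm _.
have L1 : 1 <= L by rewrite LE; lra.
have L_le : 2 * L <= 3 * u by rewrite LE; lra.
have ln2L : ln (2 * L) <= ln 3 + ln u.
  by rewrite -lnM ?posrE // ler_ln ?posrE ?mulr_gt0 //; lra.
have ln2L_u : ln (2 * L) <= 2 * ln u.
  have -> : 2 * ln u = ln (u ^+ 2) by rewrite lnXn // mulr_natl.
  rewrite ler_ln ?posrE ?mulr_gt0 ?exprn_gt0 //; last lra.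
  by apply: le_trans L_le _; rewrite expr2 ler_wpM2r //; lra.
have L_large : ln (4 * C) + g * ln (2 * L) <= L.
  rewrite lnM ?posrE //; have := ler_wpM2l (ltW g0) ln2L; rewrite mulrDr; lra.
rewrite ler_pdivrMr; last lra.
have := ln_doubling_le _ e0 eδ e_g e_small; rewrite LdefE => /(_ L1 L_large).
move=> /le_trans; apply.
set A := ln (8 * C ^+ 2 * N.+1%:R + 1).
have A0 : 0 <= A by rewrite ln_ge0 // lerDr; apply/mulr_ge0/ler0n/mulr_ge0/sqr_ge0.
rewrite -[X in _ <= X]mulrA ler_wpM2l // [X in _ <= X]mulrDl.
apply: lerD; first by rewrite ler_peMr.
by have := ler_wpM2l (ltW g0) ln2L_u; lra.
Qed.

End DoublingBound.

Theorem lemma3p2 (R : realType) (Y : Type) (d : Y -> Y -> R) (M X : set Y)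
  (N : nat) :
  is_metric d -> loglip_manifold d M N -> X `<=` M -> mcompact d X ->
  (limf_esup (fun eps : R => (ln (doubling d eps X) / ln (ln (eps^-1)))%:E)
     (0%R^'+) < +oo)%E.
Proof.
move=> dm [C [g [C0 g0 charts]]] XM cX.
have [δ δ0 lebesgue] : exists2 δ : R, 0 < δ & forall y, X y ->
    exists U, chart_domain d M N C g U /\
      forall eps, eps <= δ -> dball d eps y `&` X `<=` U.
  apply: (lebesgue_number M X) => // x Mx.
  have [U [V [phi [psi [Ux ch]]]]] := charts x Mx.
  by exists U; split=> //; [case: ch | exists V, phi, psi].
apply: (@le_lt_trans _ _ (N%:R * (ln (8 * C ^+ 2 * N.+1%:R + 1) + 4 * g))%:E);
  last exact: ltry.
have lnV_large (P : R -> Prop) :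
    (\forall u \near +oo, P u) -> \forall e \near 0^'+, P (ln e^-1).
  exact: lnV_cvgy.
apply: limf_esup_le_near; near=> e; rewrite lee_fin.
apply: (doubling_ratio_le dm C0 g0 lebesgue); near: e.
- exact: nbhs_right_gt.
- exact: nbhs_right_le.
- by apply: nbhs_right_le; rewrite mulr_gt0 ?expR_gt0.
- by apply: nbhs_right_le; rewrite !mulr_gt0 ?exprn_gt0 ?expR_gt0.
- exact: (lnV_large (>= expR 1)) (nbhs_pinfty_ge (num_real _)).
- exact: (lnV_large (fun u => 2 * `|ln C| + 4 <= u)) (nbhs_pinfty_ge (num_real _)).
- exact: (lnV_large (fun u => ln 4 + g * ln 3 + g * ln u <= u))
    (ln_sublinear_near (ln 4 + g * ln 3) g).
Unshelve. all: end_near.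
Qed.
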